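(* Let $X$ be a normed linear space, $F:X\rightrightarrows\mathbb{R}^p$ a set-valued map, $(x,y)\in\mathrm{gph}F$. Assume $F$ is Lipschitz around $x$ and $y\in\mathcal{PE}(F(x),P)$. Then $DF_\uparrow((x,y);0)\cap(-P)=\{0\}$, and for every $v\in X$ the sets $DF_\uparrow((x,y);v)$ and $DF((x,y);v)$ are $P$-bounded.
   Context: $P\subset\mathbb{R}^p$ is a closed convex pointed cone containing $0$ with nonempty interior; $F_\uparrow(x)=F(x)+P$. $\mathcal{E}(S,P)=\{y\in S:(y-P)\cap S=\{y\}\}$; contingent cone $T_S(z)=\{v:\exists h_k\to0^+,\exists v_k\to v,z+h_kv_k\in S\}$; $\mathcal{PE}(S,P)=\{y\in\mathcal{E}(S,P):T_{S+P}(y)\cap(-P)=\{0\}\}$. $F$ is Lipschitz around $x$ if there are $l>0$ and a neighborhood $\mathcal{O}$ of $x$ with $F(x_1)\subset F(x_2)+l\|x_1-x_2\|\mathbf{B}$ for $x_1,x_2\in\mathcal{O}$. The contingent derivative $DF(x,y)$ has graph $T_{\mathrm{gph}F}(x,y)$; value at $v$ written $DF((x,y);v)$. Recession cone of nonempty $S\subset\mathbb{R}^p$: $S^+=\{z:\exists h_k\to0^+,\exists y_k\in S,h_ky_k\to z\}$. $S$ is $P$-bounded if $S^+\cap(-P)=\{0\}$. *)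

From Stdlib Require Import Reals Lra.
From Stdlib Require Fin.
Open Scope R_scope.

Record NormedSpace := {
  ns_car :> Type;
  vzero : ns_car;
  vadd : ns_car -> ns_car -> ns_car;
  vopp : ns_car -> ns_car;
  vscal : R -> ns_car -> ns_car;
  vnorm : ns_car -> R;
  vadd_assoc : forall a b c, vadd a (vadd b c) = vadd (vadd a b) c;
  vadd_comm : forall a b, vadd a b = vadd b a;
  vadd_0 : forall a, vadd a vzero = a;
  vadd_opp : forall a, vadd a (vopp a) = vzero;
  vscal_addr : forall t a b, vscal t (vadd a b) = vadd (vscal t a) (vscal t b);
  vscal_addl : forall s t a, vscal (s + t) a = vadd (vscal s a) (vscal t a);
  vscal_mul : forall s t a, vscal (s * t) a = vscal s (vscal t a);
  vscal_1 : forall a, vscal 1 a = a;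
  vnorm_eq0 : forall a, vnorm a = 0 -> a = vzero;
  vnorm_scal : forall t a, vnorm (vscal t a) = Rabs t * vnorm a;
  vnorm_triangle : forall a b, vnorm (vadd a b) <= vnorm a + vnorm b
}.
Arguments vzero {_}.
Arguments vadd {_} _ _.
Arguments vopp {_} _.
Arguments vscal {_} _ _.
Arguments vnorm {_} _.

Definition vsub {X : NormedSpace} (a b : X) : X := vadd a (vopp b).

Definition cvX {X : NormedSpace} (u : nat -> X) (l : X) : Prop :=
  forall eps, 0 < eps -> exists N, forall k, (N <= k)%nat -> vnorm (vsub (u k) l) < eps.

Definition Vec (p : nat) := Fin.t p -> R.
Definition vec0 {p} : Vec p := fun _ => 0.
Definition vecadd {p} (a b : Vec p) : Vec p := fun i => a i + b i.
Definition vecopp {p} (a : Vec p) : Vec p := fun i => - a i.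
Definition vecscal {p} (t : R) (a : Vec p) : Vec p := fun i => t * a i.

Definition cvV {p} (u : nat -> Vec p) (l : Vec p) : Prop :=
  forall eps, 0 < eps -> exists N, forall k, (N <= k)%nat ->
    forall i, Rabs (u k i - l i) < eps.

Definition set_eq {T : Type} (A B : T -> Prop) : Prop := forall z, A z <-> B z.

Definition ordering_cone {p} (P : Vec p -> Prop) : Prop :=
  P vec0 /\
  (forall t a, 0 <= t -> P a -> P (vecscal t a)) /\
  (forall t a b, 0 <= t <= 1 -> P a -> P b ->
      P (vecadd (vecscal t a) (vecscal (1 - t) b))) /\
  (forall a, P a -> P (vecopp a) -> a = vec0) /\
  (forall u l, (forall k, P (u k)) -> cvV u l -> P l) /\
  (exists c r, 0 < r /\ forall w, (forall i, Rabs (w i - c i) < r) -> P w).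

Definition setaddP {p} (S P : Vec p -> Prop) : Vec p -> Prop :=
  fun w => exists y q, S y /\ P q /\ w = vecadd y q.

Definition Fup {X : NormedSpace} {p} (F : X -> Vec p -> Prop) (P : Vec p -> Prop)
  : X -> Vec p -> Prop := fun x => setaddP (F x) P.

Definition negP {p} (P : Vec p -> Prop) : Vec p -> Prop := fun w => P (vecopp w).

Definition Eff {p} (S P : Vec p -> Prop) (y : Vec p) : Prop :=
  S y /\ set_eq (fun w => (exists q, P q /\ w = vecadd y (vecopp q)) /\ S w)
                (fun w => w = y).

Definition Tcone {p} (S : Vec p -> Prop) (z : Vec p) (v : Vec p) : Prop :=
  exists h : nat -> R, (forall k, 0 < h k) /\ Un_cv h 0 /\
  exists vs : nat -> Vec p, cvV vs v /\
    forall k, S (vecadd z (vecscal (h k) (vs k))).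

Definition PEff {p} (S P : Vec p -> Prop) (y : Vec p) : Prop :=
  Eff S P y /\
  set_eq (fun v => Tcone (setaddP S P) y v /\ negP P v) (fun v => v = vec0).

(* Lipschitz around x (ball B taken for the max norm on R^p) *)
Definition Lipschitz_around {X : NormedSpace} {p} (F : X -> Vec p -> Prop) (x : X)
  : Prop :=
  exists l delta, 0 < l /\ 0 < delta /\
  forall x1 x2, vnorm (vsub x1 x) < delta -> vnorm (vsub x2 x) < delta ->
    forall w, F x1 w -> exists w', F x2 w' /\
      forall i, Rabs (w i - w' i) <= l * vnorm (vsub x1 x2).

(* contingent derivative: DF((x,y);v) = {w | (v,w) ∈ T_{gph F}(x,y)} *)
Definition DF {X : NormedSpace} {p} (F : X -> Vec p -> Prop) (x : X) (y : Vec p)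
  (v : X) : Vec p -> Prop :=
  fun w => exists h : nat -> R, (forall k, 0 < h k) /\ Un_cv h 0 /\
  exists (vs : nat -> X) (ws : nat -> Vec p), cvX vs v /\ cvV ws w /\
    forall k, F (vadd x (vscal (h k) (vs k))) (vecadd y (vecscal (h k) (ws k))).

Definition rec_cone {p} (S : Vec p -> Prop) : Vec p -> Prop :=
  fun z => exists h : nat -> R, (forall k, 0 < h k) /\ Un_cv h 0 /\
  exists ys : nat -> Vec p, (forall k, S (ys k)) /\
    cvV (fun k => vecscal (h k) (ys k)) z.

Definition P_bounded {p} (P S : Vec p -> Prop) : Prop :=
  set_eq (fun z => rec_cone S z /\ negP P z) (fun z => z = vec0).

(* The whole argument rests on one approximation property (DFup_approx): a
   direction w in DF_up((x,y);v) is, up to an error l*|v| + eps, a direction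
   of the set F(x) + P seen from y at an arbitrarily small step.  It follows
   from the Lipschitz property of F_up, which transports the points of
   F_up(x + h v_k) back to F_up(x).  With v = 0 the error vanishes, so
   DF_up((x,y);0) lies in T_{F(x)+P}(y); rescaling an asymptotic direction
   of DF_up((x,y);v) makes the error vanish too, so the recession cone of
   DF_up((x,y);v) lies in T_{F(x)+P}(y) as well.  Proper efficiency then
   kills the intersection with -P.  Since DF((x,y);v) is contained in
   DF_up((x,y);v) and is nonempty (Bolzano-Weierstrass applied to the
   difference quotients provided by the Lipschitz property), 0 belongs to
   both recession cones. *)

From Stdlib Require Import Reals Lra Lia ClassicalEpsilon FunctionalExtensionality.
Open Scope R_scope.

Section NormedSpaceFacts.
Variable X : NormedSpace.
Implicit Types a b : X.

Lemma vadd_cancel_l a b b' : vadd a b = vadd a b' -> b = b'.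
Proof.
  intro E.
  assert (K : forall c, vadd (vopp a) (vadd a c) = c).
  { intro c. rewrite vadd_assoc, (vadd_comm _ (vopp a) a), vadd_opp, vadd_comm, vadd_0.
    reflexivity. }
  rewrite <- (K b), <- (K b'), E; reflexivity.
Qed.

Lemma vscal_0l a : vscal 0 a = vzero.
Proof.
  apply (vadd_cancel_l (vscal 0 a)).
  rewrite <- vscal_addl, Rplus_0_l, vadd_0; reflexivity.
Qed.

Lemma vscal_0r t : vscal t (@vzero X) = vzero.
Proof. rewrite <- (vscal_0l vzero), <- vscal_mul, Rmult_0_r; reflexivity. Qed.

Lemma vnorm_0 : vnorm (@vzero X) = 0.
Proof. rewrite <- (vscal_0l vzero), vnorm_scal, Rabs_R0; ring. Qed.

Lemma vopp_scal a : vopp a = vscal (-1) a.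
Proof.
  apply (vadd_cancel_l a). rewrite vadd_opp.
  rewrite <- (vscal_1 _ a) at 1. rewrite <- vscal_addl, Rplus_opp_r, vscal_0l.
  reflexivity.
Qed.

Lemma vnorm_opp a : vnorm (vopp a) = vnorm a.
Proof. rewrite vopp_scal, vnorm_scal, Rabs_left by lra; ring. Qed.

Lemma vnorm_ge0 a : 0 <= vnorm a.
Proof.
  pose proof (vnorm_triangle _ a (vopp a)) as T.
  rewrite vadd_opp, vnorm_0, vnorm_opp in T. lra.
Qed.

Lemma vsub_diag a : vsub a a = vzero.
Proof. apply vadd_opp. Qed.

Lemma vsub_addKl a b : vsub (vadd a b) a = b.
Proof.
  unfold vsub. rewrite (vadd_comm _ a b), <- vadd_assoc, vadd_opp, vadd_0.
  reflexivity.
Qed.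

Lemma vnorm_sub_addl a b : vnorm (vsub a (vadd a b)) = vnorm b.
Proof.
  unfold vsub. rewrite vopp_scal, vscal_addr, <- !vopp_scal, vadd_assoc, vadd_opp,
    vadd_comm, vadd_0, vnorm_opp.
  reflexivity.
Qed.

Lemma vnorm_le_sub a b : vnorm a <= vnorm (vsub a b) + vnorm b.
Proof.
  replace a with (vadd (vsub a b) b) at 1 by
    (unfold vsub; rewrite <- vadd_assoc, (vadd_comm _ (vopp b) b), vadd_opp, vadd_0;
     reflexivity).
  apply vnorm_triangle.
Qed.

End NormedSpaceFacts.

Lemma vec_ext p (a b : Vec p) : (forall i, a i = b i) -> a = b.
Proof. intro E; apply functional_extensionality, E. Qed.

Lemma vec_bounded p (w : Vec p) : exists M, 0 <= M /\ forall i, Rabs (w i) <= M.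
Proof.
  induction p as [|p IH].
  - exists 0. split; [lra|]. intro i. apply (Fin.case0 (fun _ => _) i).
  - destruct (IH (fun i => w (Fin.FS i))) as [M [M_ge0 HM]].
    exists (Rmax M (Rabs (w Fin.F1))). split.
    + eapply Rle_trans; [exact M_ge0|apply Rmax_l].
    + intro i. pattern i; apply (@Fin.caseS' p i).
      * apply Rmax_r.
      * intro j. eapply Rle_trans; [apply HM|apply Rmax_l].
Qed.

Lemma inv_succ_pos n : 0 < / (INR n + 1).
Proof. apply Rinv_0_lt_compat. pose proof (pos_INR n). lra. Qed.

Lemma inv_succ_small eps : 0 < eps ->
  exists N, forall n, (N <= n)%nat -> / (INR n + 1) < eps.
Proof.
  intro eps_pos. destruct (archimed_cor1 eps eps_pos) as [N [HN N_pos]].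
  exists N. intros n Hn. apply le_INR in Hn. apply lt_0_INR in N_pos.
  eapply Rle_lt_trans; [|exact HN]. apply Rinv_le_contravar; lra.
Qed.

Lemma inv_succ_cv : Un_cv (fun n => / (INR n + 1)) 0.
Proof.
  intros eps eps_pos. destruct (inv_succ_small eps eps_pos) as [N HN].
  exists N. intros n Hn. unfold R_dist.
  rewrite Rminus_0_r, Rabs_right by (left; apply inv_succ_pos). auto.
Qed.

(* Bolzano-Weierstrass for real sequences, in subsequence form: Stdlib
   provides a cluster point, from which a subsequence is extracted. *)
Lemma bounded_real_subseq (u : nat -> R) M : (forall k, Rabs (u k) <= M) ->
  exists (phi : nat -> nat) a, (forall k, (k <= phi k)%nat) /\ Un_cv (fun k => u (phi k)) a.
Proof.
  intro HM.
  destruct (Bolzano_Weierstrass u (fun c => -M <= c <= M) (compact_P3 (-M) M)) as [a Ha].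
  { intro n. specialize (HM n). unfold Rabs in HM; destruct Rcase_abs in HM; lra. }
  assert (near : forall n N, exists m, (N <= m)%nat /\ Rabs (u m - a) < / (INR n + 1)).
  { intros n N. destruct (Ha (disc a (mkposreal _ (inv_succ_pos n))) N) as [m Hm].
    - exists (mkposreal _ (inv_succ_pos n)). intros z Hz. exact Hz.
    - exists m. exact Hm. }
  destruct (choice (fun nN m => (snd nN <= m)%nat /\ Rabs (u m - a) < / (INR (fst nN) + 1)))
    as [g Hg].
  { intros [n N]. apply near. }
  pose (phi := fix phi n := match n with O => g (O, O) | S n' => g (S n', S (phi n')) end).
  exists phi, a. split.
  - induction k as [|k IH]; [lia|]. simpl. pose proof (proj1 (Hg (S k, S (phi k)))).
    simpl in *. lia.
  - intros eps eps_pos. destruct (inv_succ_small eps eps_pos) as [N HN].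
    exists N. intros k Hk. eapply Rlt_trans; [|apply (HN k Hk)].
    destruct k; apply Hg.
Qed.

Lemma bounded_vec_subseq p (u : nat -> Vec p) M : (forall k i, Rabs (u k i) <= M) ->
  exists (phi : nat -> nat) l, (forall k, (k <= phi k)%nat) /\ cvV (fun k => u (phi k)) l.
Proof.
  revert u. induction p as [|p IH]; intros u HM.
  - exists (fun k => k), vec0. split; [intro; lia|].
    intros eps _. exists O. intros k _ i. apply (Fin.case0 (fun _ => _) i).
  - destruct (IH (fun k i => u k (Fin.FS i))) as [phi [tl [Hphi Htl]]];
      [intros; apply HM|].
    destruct (bounded_real_subseq (fun k => u (phi k) Fin.F1) M) as [psi [hd [Hpsi Hhd]]];
      [intros; apply HM|].
    exists (fun k => phi (psi k)), (fun i => Fin.caseS' i (fun _ => R) hd tl). split.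
    { intro k. specialize (Hphi (psi k)). specialize (Hpsi k). lia. }
    intros eps eps_pos.
    destruct (Htl eps eps_pos) as [N1 H1]. destruct (Hhd eps eps_pos) as [N2 H2].
    exists (N1 + N2)%nat. intros k Hk i. pattern i; apply (@Fin.caseS' p i).
    + apply H2. lia.
    + intro j. apply (H1 (psi k)). specialize (Hpsi k). lia.
Qed.

Definition diffq {p} (y b : Vec p) (h : R) : Vec p := fun i => (b i - y i) / h.

Lemma diffq_step p (y b : Vec p) h : 0 < h -> vecadd y (vecscal h (diffq y b h)) = b.
Proof. intro h_pos. apply vec_ext; intro i. unfold vecadd, vecscal, diffq. field. lra. Qed.

Lemma diffq_dist p (y b : Vec p) h w i : 0 < h ->
  Rabs (diffq y b h i - w) = Rabs (b i - (y i + h * w)) / h.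
Proof.
  intro h_pos. replace (diffq y b h i - w) with ((b i - (y i + h * w)) / h)
    by (unfold diffq; field; lra).
  unfold Rdiv. rewrite Rabs_mult, Rabs_inv, (Rabs_right h) by lra. reflexivity.
Qed.

Lemma diffq_bound p (y b w : Vec p) h c : 0 < h ->
  (forall i, Rabs (b i - (y i + h * w i)) <= h * c) ->
  forall i, Rabs (diffq y b h i - w i) <= c.
Proof.
  intros h_pos close i. rewrite diffq_dist by exact h_pos.
  apply (Rmult_le_reg_r h); [exact h_pos|]. unfold Rdiv.
  rewrite Rmult_assoc, Rinv_l, Rmult_1_r, (Rmult_comm c h) by lra. apply close.
Qed.

Lemma Tcone_of_approx p (S : Vec p -> Prop) (y z : Vec p) :
  (forall eps, 0 < eps -> exists t (u : Vec p), 0 < t < eps /\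
     (forall i, Rabs (u i - z i) < eps) /\ S (vecadd y (vecscal t u))) ->
  Tcone S y z.
Proof.
  intro approx.
  destruct (choice (fun n (tu : R * Vec p) => 0 < fst tu < / (INR n + 1) /\
     (forall i, Rabs (snd tu i - z i) < / (INR n + 1)) /\
     S (vecadd y (vecscal (fst tu) (snd tu))))) as [tu Htu].
  { intro n. destruct (approx _ (inv_succ_pos n)) as [t [u Hu]]. exists (t, u). exact Hu. }
  exists (fun n => fst (tu n)). split; [intro n; apply Htu|]. split.
  - intros eps eps_pos. destruct (inv_succ_small eps eps_pos) as [N HN].
    exists N. intros n Hn. unfold R_dist.
    rewrite Rminus_0_r, Rabs_right by (left; apply Htu).
    eapply Rlt_trans; [apply Htu|auto].
  - exists (fun n => snd (tu n)). split; [|intro n; apply Htu].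
    intros eps eps_pos. destruct (inv_succ_small eps eps_pos) as [N HN].
    exists N. intros n Hn i. eapply Rlt_trans; [apply Htu|auto].
Qed.

Lemma rec_cone_mono p (S S' : Vec p -> Prop) z :
  (forall w, S w -> S' w) -> rec_cone S z -> rec_cone S' z.
Proof.
  intros sub [ts [ts_pos [ts_cv [ys [Hys Hcv]]]]].
  exists ts. split; [|split]; auto. exists ys. split; auto.
Qed.

Lemma rec_cone_zero p (S : Vec p -> Prop) : (exists w, S w) -> rec_cone S vec0.
Proof.
  intros [w Hw]. destruct (vec_bounded p w) as [M [M_ge0 HM]].
  exists (fun k => / (INR k + 1)). split; [intro; apply inv_succ_pos|].
  split; [apply inv_succ_cv|]. exists (fun _ => w). split; auto.
  intros eps eps_pos. destruct (inv_succ_small (eps / (M + 1))) as [N HN].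
  { apply Rdiv_lt_0_compat; lra. }
  exists N. intros k Hk i. specialize (HN k Hk). specialize (HM i).
  pose proof (inv_succ_pos k) as tk_pos. set (tk := / (INR k + 1)) in *.
  unfold vecscal, vec0. rewrite Rminus_0_r, Rabs_mult, Rabs_right by lra.
  assert (tk * (M + 1) < eps) by
    (apply (Rmult_lt_compat_r (M + 1)) in HN; [|lra]; unfold Rdiv in HN;
     rewrite Rmult_assoc, Rinv_l, Rmult_1_r in HN; lra).
  nra.
Qed.

Lemma negP_zero p (P : Vec p -> Prop) : P vec0 -> negP P vec0.
Proof.
  intro P0. unfold negP. replace (vecopp vec0) with (@vec0 p); [exact P0|].
  apply vec_ext; intro i; unfold vecopp, vec0; ring.
Qed.

Definition lipschitz_near {X : NormedSpace} {p} (F : X -> Vec p -> Prop) (x : X)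
  (l delta : R) : Prop :=
  forall x1 x2, vnorm (vsub x1 x) < delta -> vnorm (vsub x2 x) < delta ->
    forall w, F x1 w -> exists w', F x2 w' /\
      forall i, Rabs (w i - w' i) <= l * vnorm (vsub x1 x2).

Section LipschitzMap.
Context {X : NormedSpace} {p : nat} {P : Vec p -> Prop} {F : X -> Vec p -> Prop}.
Context {x : X} {y : Vec p} {l delta : R}.
Hypothesis P_zero : P vec0.
Hypothesis y_in_Fx : F x y.
Hypothesis l_pos : 0 < l.
Hypothesis delta_pos : 0 < delta.
Hypothesis F_lip : lipschitz_near F x l delta.

Lemma Fup_of_F a b : F a b -> Fup F P a b.
Proof.
  intro Hab. exists b, vec0. split; [exact Hab|]. split; [exact P_zero|].
  apply vec_ext; intro i; unfold vecadd, vec0; ring.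
Qed.

Lemma DF_sub_DFup v w : DF F x y v w -> DF (Fup F P) x y v w.
Proof.
  intros [hs [hs_pos [hs_cv [vs [ws [Hvs [Hws HF]]]]]]].
  exists hs. split; [|split]; auto. exists vs, ws. split; [|split]; auto.
  intro k. apply Fup_of_F, HF.
Qed.

Lemma DF_zero_zero : DF F x y vzero vec0.
Proof.
  exists (fun k => / (INR k + 1)). split; [intro; apply inv_succ_pos|].
  split; [apply inv_succ_cv|].
  exists (fun _ => vzero), (fun _ => vec0). split; [|split].
  - intros eps eps_pos. exists O. intros. rewrite vsub_diag, vnorm_0. lra.
  - intros eps eps_pos. exists O. intros. unfold vec0. rewrite Rminus_0_r, Rabs_R0. lra.
  - intro k. rewrite vscal_0r, vadd_0.
    replace (vecadd y (vecscal (/ (INR k + 1)) vec0)) with y; [exact y_in_Fx|].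
    apply vec_ext; intro i; unfold vecadd, vecscal, vec0; ring.
Qed.

Lemma Fup_lip_to_x x1 b : vnorm (vsub x1 x) < delta -> Fup F P x1 b ->
  exists b', Fup F P x b' /\ forall i, Rabs (b i - b' i) <= l * vnorm (vsub x1 x).
Proof.
  intros near [a [q [Ha [Hq ->]]]].
  destruct (F_lip x1 x near) with (w := a) as [a' [Ha' Hclose]]; [|exact Ha|].
  { rewrite vsub_diag, vnorm_0; lra. }
  exists (vecadd a' q). split; [exists a', q; auto|].
  intro i. unfold vecadd. replace (a i + q i - (a' i + q i)) with (a i - a' i) by ring.
  apply Hclose.
Qed.

Lemma Fup_step_pullback h u w' : 0 < h -> h * vnorm u < delta ->
  Fup F P (vadd x (vscal h u)) (vecadd y (vecscal h w')) ->
  exists w'', (forall i, Rabs (w'' i - w' i) <= l * vnorm u) /\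
    Fup F P x (vecadd y (vecscal h w'')).
Proof.
  intros h_pos small Hb.
  assert (dist : vnorm (vsub (vadd x (vscal h u)) x) = h * vnorm u)
    by (rewrite vsub_addKl, vnorm_scal, Rabs_right by lra; reflexivity).
  destruct (Fup_lip_to_x (vadd x (vscal h u)) _ ltac:(rewrite dist; lra) Hb)
    as [b' [Hb' close]].
  exists (diffq y b' h). split; [|rewrite diffq_step; [exact Hb'|exact h_pos]].
  apply diffq_bound; [exact h_pos|]. intro i. specialize (close i).
  rewrite dist in close. unfold vecadd, vecscal in close. rewrite Rabs_minus_sym.
  replace (h * (l * vnorm u)) with (l * (h * vnorm u)) by ring. exact close.
Qed.

(* Apply the pullback at a term (h_k, v_k, w_k) of a defining sequence with
   h_k small and v_k, w_k close to v, w. *)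
Lemma DFup_approx v w : DF (Fup F P) x y v w -> forall eps, 0 < eps ->
  exists h (u : Vec p), 0 < h < eps /\ (forall i, Rabs (u i - w i) <= l * vnorm v + eps) /\
    Fup F P x (vecadd y (vecscal h u)).
Proof.
  intros [hs [hs_pos [hs_cv [vs [ws [Hvs [Hws HF]]]]]]] eps eps_pos.
  pose proof (vnorm_ge0 _ v) as v_ge0.
  set (e := eps / (l + 1)).
  assert (e_pos : 0 < e) by (apply Rdiv_lt_0_compat; lra).
  assert (e_eq : e * (l + 1) = eps) by (unfold e; field; lra).
  set (r := Rmin eps (delta / (vnorm v + e))).
  assert (r_pos : 0 < r) by (apply Rmin_pos; [|apply Rdiv_lt_0_compat]; lra).
  destruct (hs_cv r r_pos) as [N1 H1].
  destruct (Hvs e e_pos) as [N2 H2]. destruct (Hws e e_pos) as [N3 H3].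
  set (k := (N1 + N2 + N3)%nat).
  specialize (H1 k ltac:(lia)). specialize (H2 k ltac:(lia)). specialize (H3 k ltac:(lia)).
  unfold R_dist in H1. rewrite Rminus_0_r, Rabs_right in H1 by (left; apply hs_pos).
  pose proof (hs_pos k) as hk_pos. pose proof (HF k) as HFk. set (hk := hs k) in *.
  assert (vk_le : vnorm (vs k) < vnorm v + e) by
    (pose proof (vnorm_le_sub _ (vs k) v); lra).
  assert (hk_eps : hk < eps) by (eapply Rlt_le_trans; [exact H1|apply Rmin_l]).
  assert (step_small : hk * vnorm (vs k) < delta).
  { assert (hk * (vnorm v + e) <= delta).
    { apply (Rle_trans _ (delta / (vnorm v + e) * (vnorm v + e))).
      - apply Rmult_le_compat_r; [lra|]. left; eapply Rlt_le_trans; [exact H1|apply Rmin_r].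
      - right; field; lra. }
    pose proof (vnorm_ge0 _ (vs k)). nra. }
  destruct (Fup_step_pullback hk (vs k) (ws k) hk_pos step_small HFk) as [u [Hu HS]].
  exists hk, u. split; [lra|]. split; [|exact HS].
  intro i. specialize (Hu i). specialize (H3 i).
  replace (u i - w i) with ((u i - ws k i) + (ws k i - w i)) by ring.
  eapply Rle_trans; [apply Rabs_triang|].
  assert (l * vnorm (vs k) <= l * (vnorm v + e)) by (apply Rmult_le_compat_l; lra).
  lra.
Qed.

Lemma F_step_quotient v h : 0 < h -> h * vnorm v < delta ->
  exists a, F (vadd x (vscal h v)) a /\ forall i, Rabs (diffq y a h i) <= l * vnorm v.
Proof.
  intros h_pos small.
  assert (dist : vnorm (vsub (vadd x (vscal h v)) x) = h * vnorm v)
    by (rewrite vsub_addKl, vnorm_scal, Rabs_right by lra; reflexivity).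
  destruct (F_lip x (vadd x (vscal h v))) with (w := y) as [a [Ha close]];
    [rewrite vsub_diag, vnorm_0; lra|rewrite dist; lra|exact y_in_Fx|].
  exists a. split; [exact Ha|].
  assert (bound := diffq_bound p y a vec0 h (l * vnorm v) h_pos).
  unfold vec0 in bound. intro i. rewrite <- (Rminus_0_r (diffq y a h i)). apply bound.
  intro j. specialize (close j).
  rewrite vnorm_sub_addl, vnorm_scal, (Rabs_right h) in close by lra.
  rewrite Rmult_0_r, Rplus_0_r, Rabs_minus_sym.
  replace (h * (l * vnorm v)) with (l * (h * vnorm v)) by ring. exact close.
Qed.

(* DF((x,y);v) is nonempty: along steps h_k = c/(k+1) -> 0 the quotients of
   F_step_quotient are bounded, and a convergent subsequence (Bolzano-
   Weierstrass) yields an element. *)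
Lemma DF_nonempty v : exists w, DF F x y v w.
Proof.
  pose proof (vnorm_ge0 _ v) as v_ge0. set (c := delta / (vnorm v + 1)).
  assert (c_pos : 0 < c) by (apply Rdiv_lt_0_compat; lra).
  set (hs := fun k => c * / (INR k + 1)).
  assert (hs_pos : forall k, 0 < hs k)
    by (intro; apply Rmult_lt_0_compat; [lra|apply inv_succ_pos]).
  assert (hs_small : forall k, hs k * vnorm v < delta).
  { intro k. pose proof (inv_succ_pos k).
    assert (/ (INR k + 1) <= 1)
      by (rewrite <- Rinv_1; apply Rinv_le_contravar; [lra|pose proof (pos_INR k); lra]).
    assert (c * (vnorm v + 1) = delta) by (unfold c; field; lra).
    unfold hs. nra. }
  destruct (choice (fun k a => F (vadd x (vscal (hs k) v)) a /\
     forall i, Rabs (diffq y a (hs k) i) <= l * vnorm v)) as [a Ha].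
  { intro k. exact (F_step_quotient v (hs k) (hs_pos k) (hs_small k)). }
  destruct (bounded_vec_subseq p (fun k => diffq y (a k) (hs k)) (l * vnorm v))
    as [phi [w [phi_ge Hw]]]; [intros k; apply Ha|].
  exists w, (fun k => hs (phi k)). split; [intro; apply hs_pos|]. split.
  - intros eps eps_pos. destruct (inv_succ_small (eps / c)) as [N HN].
    { apply Rdiv_lt_0_compat; lra. }
    exists N. intros n Hn. unfold R_dist.
    rewrite Rminus_0_r, Rabs_right by (left; apply hs_pos).
    specialize (HN (phi n) ltac:(specialize (phi_ge n); lia)).
    apply (Rmult_lt_compat_l c) in HN; [|lra].
    replace (c * (eps / c)) with eps in HN by (field; lra). exact HN.
  - exists (fun _ => v), (fun k => diffq y (a (phi k)) (hs (phi k))).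
    split; [|split; [exact Hw|]].
    + intros eps eps_pos. exists O. intros. rewrite vsub_diag, vnorm_0. lra.
    + intro k. rewrite diffq_step by apply hs_pos. apply Ha.
Qed.

End LipschitzMap.

Section ProperEfficiency.
Context {X : NormedSpace} {p : nat} {P : Vec p -> Prop} {F : X -> Vec p -> Prop}.
Context {x : X} {y : Vec p} {l delta : R}.
Hypothesis l_pos : 0 < l.
Hypothesis delta_pos : 0 < delta.
Hypothesis F_lip : lipschitz_near F x l delta.
Hypothesis y_PE : PEff (F x) P y.

(* With v = 0 the error in DFup_approx vanishes: DF_up((x,y);0) is contained
   in the contingent cone of F(x) + P at y. *)
Lemma DFup_zero_tangent w : DF (Fup F P) x y vzero w -> Tcone (Fup F P x) y w.
Proof.
  intro Hw. apply Tcone_of_approx. intros eps eps_pos.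
  destruct (DFup_approx l_pos delta_pos F_lip vzero w Hw (eps / 2))
    as [h [u [Hh [Hu HS]]]]; [lra|].
  exists h, u. split; [lra|]. split; [|exact HS].
  intro i. specialize (Hu i). rewrite vnorm_0, Rmult_0_r in Hu. lra.
Qed.

(* An asymptotic direction z = lim t_j w_j (t_j -> 0, w_j in DF_up((x,y);v))
   is tangent to F(x) + P at y: rescaling by t_j shrinks the error l|v| of
   DFup_approx to t_j l|v|. *)
Lemma rec_DFup_tangent v z : rec_cone (DF (Fup F P) x y v) z -> Tcone (Fup F P x) y z.
Proof.
  intros [ts [ts_pos [ts_cv [ws [Hws Hcv]]]]]. apply Tcone_of_approx.
  intros eps eps_pos. pose proof (vnorm_ge0 _ v) as v_ge0.
  set (K := l * vnorm v + 1).
  assert (K_pos : 0 < K) by (unfold K; nra).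
  destruct (ts_cv (eps / (2 * K))) as [N1 H1]; [apply Rdiv_lt_0_compat; lra|].
  destruct (Hcv (eps / 2)) as [N2 H2]; [lra|].
  set (j := (N1 + N2)%nat). specialize (H1 j ltac:(lia)). specialize (H2 j ltac:(lia)).
  unfold R_dist in H1. rewrite Rminus_0_r, Rabs_right in H1 by (left; apply ts_pos).
  pose proof (ts_pos j) as tj_pos. set (tj := ts j) in *.
  assert (tjK : tj * K < eps / 2).
  { apply (Rmult_lt_compat_r K) in H1; [|lra].
    replace (eps / (2 * K) * K) with (eps / 2) in H1 by (field; lra). exact H1. }
  set (e := Rmin 1 (eps * tj)).
  assert (e_pos : 0 < e) by (apply Rmin_pos; nra).
  destruct (DFup_approx l_pos delta_pos F_lip v (ws j) (Hws j) e e_pos)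
    as [h [u [Hh [Hu HS]]]].
  exists (h / tj), (vecscal tj u). split; [split|split].
  - apply Rdiv_lt_0_compat; lra.
  - apply (Rmult_lt_reg_r tj); [lra|].
    replace (h / tj * tj) with h by (field; lra).
    assert (e <= eps * tj) by apply Rmin_r. lra.
  - intro i. specialize (Hu i). specialize (H2 i). unfold vecscal in *.
    assert (Rabs (u i - ws j i) <= K) by (assert (e <= 1) by apply Rmin_l; unfold K; lra).
    replace (tj * u i - z i) with (tj * (u i - ws j i) + (tj * ws j i - z i)) by ring.
    eapply Rle_lt_trans; [apply Rabs_triang|].
    rewrite Rabs_mult, (Rabs_right tj) by lra.
    assert (tj * Rabs (u i - ws j i) <= tj * K) by (apply Rmult_le_compat_l; lra).
    lra.
  - replace (vecadd y (vecscal (h / tj) (vecscal tj u))) with (vecadd y (vecscal h u));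
      [exact HS|].
    apply vec_ext; intro i; unfold vecadd, vecscal; field; lra.
Qed.

Lemma tangent_negP_zero w : Tcone (Fup F P x) y w -> negP P w -> w = vec0.
Proof. intros T N. apply (proj2 y_PE). split; assumption. Qed.

End ProperEfficiency.

Theorem proposition6p6 (X : NormedSpace) (p : nat) (P : Vec p -> Prop)
  (hP : ordering_cone P) (F : X -> Vec p -> Prop) (x : X) (y : Vec p)
  (hgph : F x y) (hLip : Lipschitz_around F x) (hPE : PEff (F x) P y) :
  set_eq (fun w => DF (Fup F P) x y vzero w /\ negP P w) (fun w => w = vec0) /\
  (forall v : X, P_bounded P (DF (Fup F P) x y v) /\ P_bounded P (DF F x y v)).
Proof.
  destruct hLip as [l [delta [l_pos [delta_pos F_lip]]]].
  assert (P_zero : P vec0) by apply hP.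
  pose proof (@tangent_negP_zero X p P F x y hPE) as PE.
  split.
  - intro w. split.
    + intros [Hw Nw]. exact (PE w (DFup_zero_tangent l_pos delta_pos F_lip w Hw) Nw).
    + intros ->. split; [|apply negP_zero, P_zero].
      exact (DF_sub_DFup P_zero _ _ (DF_zero_zero hgph)).
  - intro v. destruct (DF_nonempty hgph delta_pos F_lip v) as [w0 Hw0].
    assert (sub : forall w, DF F x y v w -> DF (Fup F P) x y v w) by apply (DF_sub_DFup P_zero).
    assert (rec_zero : forall z, rec_cone (DF (Fup F P) x y v) z -> negP P z -> z = vec0)
      by (intros z Rz; exact (PE z (rec_DFup_tangent l_pos delta_pos F_lip v z Rz))).
    split; intro z; split.
    + intros [Rz Nz]. exact (rec_zero z Rz Nz).
    + intros ->. split; [|apply negP_zero, P_zero]. apply rec_cone_zero. eauto.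
    + intros [Rz Nz]. exact (rec_zero z (rec_cone_mono p _ _ z sub Rz) Nz).
    + intros ->. split; [|apply negP_zero, P_zero]. apply rec_cone_zero. eauto.
Qed.
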